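(* Let $A$ and $B$ be nontrivial commutative groups. Then $\delta(A,B)=\nu(\mathbb{Z}_{e(B)}[A])-1$ (with the convention $\infty-1=\infty$). In particular, $\delta(A,B)<\infty$ if and only if the augmentation ideal of $\mathbb{Z}_{e(B)}[A]$ is nilpotent, and $\delta(A,B)$ depends only on $A$ and $\exp(B)$.
   Context: For commutative groups $A,B$, $B^A$ denotes the commutative group (under pointwise addition) of all maps $A\to B$. For $a\in A$, the difference operator $\Delta_a:B^A\to B^A$ is $(\Delta_a f)(x)=f(x+a)-f(x)$. Let $\widetilde{\mathbb N}=\mathbb N\cup\{-\infty,\infty\}$ ($\mathbb N=\{0,1,2,\dots\}$), totally ordered with $-\infty$ least and $\infty$ greatest. The functional degree $\operatorname{fdeg}(f)\in\widetilde{\mathbb N}$ of $f\in B^A$ is: $-\infty$ if $f=0$; otherwise the least $n\in\mathbb N$ such that $\Delta_{a_1}\cdots\Delta_{a_{n+1}}f=0$ for all $a_1,\dots,a_{n+1}\in A$; and $\infty$ if no such $n$ exists. Define $\delta(A,B)=\sup\{\operatorname{fdeg}(f): f\in B^A\}$. $\mathbb{Z}_n=\mathbb{Z}/n\mathbb{Z}$ (so $\mathbb{Z}_0=\mathbb{Z}$). $\exp(B)$ is the least $n\ge1$ with $nB=0$, or $\infty$; $e(B)=\exp(B)$ if finite and $e(B)=0$ otherwise. For a commutative ring $R$ and commutative group $A$, the augmentation ideal $I$ of the group ring $R[A]$ is the kernel of $\sum r_a[a]\mapsto\sum r_a$, and $\nu(R[A])$ is the least $n\in\mathbb N$ with $I^n=0$,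 or $\infty$ if none exists. *)

From mathcomp Require Import all_boot all_order all_algebra.
From Stdlib Require Import ClassicalEpsilon.
Set Implicit Arguments. Unset Strict Implicit. Unset Printing Implicit Defensive.
Import GRing.Theory.
Local Open Scope ring_scope.

Inductive enat := NInf | Fin of nat | PInf.

Definition ele (x y : enat) : Prop :=
  match x, y with
  | NInf, _ => True
  | _, PInf => True
  | Fin m, Fin n => (m <= n)%N
  | _, _ => False
  end.

Definition esup (S : enat -> Prop) : enat :=
  epsilon (inhabits NInf)
    (fun u => (forall x, S x -> ele x u) /\ (forall v, (forall x, S x -> ele x v) -> ele u v)).

Definition least (P : nat -> Prop) : enat :=
  if excluded_middle_informative (exists n, P n)
  then Fin (epsilon (inhabits 0%N) (fun n => P n /\ forall m, P m -> (n <= m)%N))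
  else PInf.

Definition epred (x : enat) : enat :=
  match x with Fin n => Fin n.-1 | y => y end.

Definition Delta (A B : zmodType) (a : A) (f : A -> B) : A -> B :=
  fun x => f (x + a) - f x.

Definition fdeg (A B : zmodType) (f : A -> B) : enat :=
  if excluded_middle_informative (forall x, f x = 0) then NInf
  else least (fun n => forall s : seq A, size s = n.+1 ->
                 forall x, foldr (@Delta A B) f s x = 0).

Definition delta (A B : zmodType) : enat :=
  esup (fun d => exists f : A -> B, fdeg f = d).

Definition expB (B : zmodType) : enat :=
  least (fun n => (0 < n)%N /\ forall b : B, b *+ n = 0).
Definition eB (B : zmodType) : nat :=
  match expB B with Fin n => n | _ => 0%N end.

(* Group ring Z_e[A] (Z_0 = Z): an element is represented by a formal sum
   sum r_i [a_i] with integer coefficients, given as a list of pairs (r_i, a_i);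
   coefficients are read modulo e. *)
Definition gr (A : zmodType) := seq (int * A).

Definition coef (A : zmodType) (p : gr A) (x : A) : int :=
  \sum_(ra <- p | ra.2 == x) ra.1.

Definition gr_zero (e : nat) (A : zmodType) (p : gr A) : Prop :=
  forall x, (coef p x = 0 %[mod e%:Z])%Z.

Definition gr_mul (A : zmodType) (p q : gr A) : gr A :=
  [seq (ra.1 * sb.1, ra.2 + sb.2) | ra <- p, sb <- q].

Definition aug (A : zmodType) (p : gr A) : int := \sum_(ra <- p) ra.1.
Definition in_aug_ideal (e : nat) (A : zmodType) (p : gr A) : Prop :=
  (aug p = 0 %[mod e%:Z])%Z.

(* ipow e n p : p represents an element of I^n (I^0 = whole ring,
   I^(n+1) = additive subgroup generated by products x*y, x in I^n, y in I) *)
Inductive ipow (e : nat) (A : zmodType) : nat -> gr A -> Prop :=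
| ipow_0 p : ipow e 0 p
| ipow_nil n : ipow e n.+1 [::]
| ipow_add n p q : ipow e n.+1 p -> ipow e n.+1 q -> ipow e n.+1 (p ++ q)
| ipow_mul n p q : ipow e n p -> in_aug_ideal e q -> ipow e n.+1 (gr_mul p q).

Definition aug_pow_zero (e : nat) (A : zmodType) (n : nat) : Prop :=
  forall p : gr A, ipow e n p -> gr_zero e p.

Definition nu (e : nat) (A : zmodType) : enat := least (aug_pow_zero e A).

Definition nontrivial (G : zmodType) : Prop := exists x : G, x != 0.

From mathcomp Require Import all_boot all_order all_algebra.
From Stdlib Require Import Classical ClassicalEpsilon.
Set Implicit Arguments. Unset Strict Implicit. Unset Printing Implicit Defensive.
Import GRing.Theory.
Local Open Scope ring_scope.

(* The group ring Z[A] acts on B^A by ([a] f)(y) = f(y + a), and an n-fold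
   difference Delta_{a_1} ... Delta_{a_n} f is the action of the product
   ([a_1] - [0]) ... ([a_n] - [0]) of generators of the augmentation ideal I.
   Hence every f of degree < n is killed by I^n, and conversely, if I^n is
   nonzero in Z_e[A] with e = e(B), some coefficient of an element of I^n is
   nonzero mod e, so it does not kill a suitable B-valued indicator function.
   The functions of degree < n are therefore all of B^A exactly when I^n = 0. *)

Lemma exists_least (P : nat -> Prop) k :
  P k -> exists n, P n /\ forall m, P m -> (n <= m)%N.
Proof.
elim/ltn_ind: k => k IH Pk.
case: (classic (exists m, (m < k)%N /\ P m)) => [[m [ltmk Pm]]|no_smaller].
  exact: IH Pm.
exists k; split=> // m Pm; rewrite leqNgt; apply/negP => ltmk.
by apply: no_smaller; exists m.
Qed.

Lemma leastP (P : nat -> Prop) n :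
  least P = Fin n -> P n /\ forall m, P m -> (n <= m)%N.
Proof.
rewrite /least; case: excluded_middle_informative => [[k Pk]|] // [<-].
apply: (epsilon_spec (inhabits 0%N) (fun n => P n /\ _)).
exact: exists_least Pk.
Qed.

Lemma least_PInf (P : nat -> Prop) : least P = PInf <-> ~ exists n, P n.
Proof. by rewrite /least; case: excluded_middle_informative. Qed.

Lemma least_neq_NInf (P : nat -> Prop) : least P <> NInf.
Proof. by rewrite /least; case: excluded_middle_informative. Qed.

Lemma ele_trans x y z : ele x y -> ele y z -> ele x z.
Proof.
case: x => [|m|]; case: y => [|n|]; case: z => [|p|] //=; exact: leq_trans.
Qed.

Lemma ele_anti x y : ele x y -> ele y x -> x = y.
Proof.
case: x => [|m|]; case: y => [|n|] //= lemn lenm.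
by congr Fin; apply/eqP; rewrite eqn_leq lemn lenm.
Qed.

Lemma esup_eq (S : enat -> Prop) u :
  (forall x, S x -> ele x u) ->
  (forall v, (forall x, S x -> ele x v) -> ele u v) -> esup S = u.
Proof.
move=> ub least_ub; rewrite /esup.
set is_sup := fun u => _.
have [ub' least_ub'] := epsilon_spec (inhabits NInf) is_sup (ex_intro _ u (conj ub least_ub)).
by apply: ele_anti; [apply: least_ub' | apply: least_ub].
Qed.

Section Exponent.

Variable B : zmodType.

Lemma mulrn_eB (b : B) : b *+ eB B = 0.
Proof.
rewrite /eB; case E: (expB B) => [|n|] //.
by have [[_ nB0] _] := leastP E; apply: nB0.
Qed.

Lemma eB_dvdn n : (0 < n)%N -> (forall b : B, b *+ n = 0) -> (eB B %| n)%N.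
Proof.
move=> n_gt0 nB0; rewrite /eB; case E: (expB B) => [|e|].
- by move: E => /least_neq_NInf.
- have [[e_gt0 eB0] e_min] := leastP E.
  have rem_kills (b : B) : b *+ (n %% e) = 0.
    by have := nB0 b; rewrite {1}(divn_eq n e) mulrnDr mulrnA eB0 add0r.
  rewrite /dvdn; apply: contraT; rewrite -lt0n => rem_gt0.
  by have := e_min _ (conj rem_gt0 rem_kills); rewrite leqNgt ltn_mod e_gt0.
- by move/least_PInf: E; case; exists n.
Qed.

Lemma mulrz_eq0_mod_eB (c : int) :
  (forall b : B, b *~ c = 0) <-> (c = 0 %[mod (eB B)%:Z])%Z.
Proof.
split=> [cB0|c_mod b].
- rewrite mod0z; apply/dvdz_mod0P; change (eB B %| `|c|)%N.
  have [-> //|c_neq0] := eqVneq c 0.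
  apply: eB_dvdn; first by rewrite absz_gt0.
  move=> b; case: c cB0 {c_neq0} => n cB0; first by rewrite pmulrn cB0.
  by apply/eqP; rewrite -oppr_eq0 pmulrn -mulrNz -NegzE cB0.
- rewrite (divz_eq c (eB B)) c_mod mod0z addr0 mulrzA -pmulrn; exact: mulrn_eB.
Qed.

End Exponent.

Section Differences.

Variables A B : zmodType.

Definition gr_act (p : gr A) (f : A -> B) : A -> B :=
  fun y => \sum_(ra <- p) f (y + ra.2) *~ ra.1.

Lemma gr_act_cat p q f y : gr_act (p ++ q) f y = gr_act p f y + gr_act q f y.
Proof. by rewrite /gr_act big_cat. Qed.

Lemma gr_act_mul p q f y :
  gr_act (gr_mul p q) f y = \sum_(sb <- q) gr_act p (fun z => f (z + sb.2)) y *~ sb.1.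
Proof.
rewrite /gr_act /gr_mul big_allpairs_dep /= exchange_big /=.
apply: eq_bigr => sb _; rewrite mulrz_suml; apply: eq_bigr => ra _ /=.
by rewrite addrA mulrzA.
Qed.

Lemma gr_act_Delta p a f y :
  gr_act p (Delta a f) y = gr_act p (fun z => f (z + a)) y - gr_act p f y.
Proof. by rewrite /gr_act -sumrB; apply: eq_bigr => ra _; rewrite /Delta mulrzBl. Qed.

Lemma gr_act_coef p f y (L : seq A) : uniq L -> {subset map snd p <= L} ->
  gr_act p f y = \sum_(a <- L) f (y + a) *~ coef p a.
Proof.
move=> uniqL; elim: p => [|[r a] p IH] sub_pL.
  by rewrite /gr_act big_nil big1 // => b _; rewrite /coef big_nil mulr0z.
have aL : a \in L by apply: sub_pL; rewrite in_cons eqxx.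
rewrite /gr_act big_cons /= -/(gr_act p f y) IH; last first.
  by move=> z zp; apply: sub_pL; rewrite in_cons zp orbT.
rewrite (bigD1_seq a) //= [in RHS](bigD1_seq a) //= {3}/coef big_cons eqxx /=.
rewrite mulrzDr -addrA; congr (_ + _); congr (_ + _); apply: eq_bigr => b ab.
by rewrite /coef big_cons /= eq_sym (negPf ab).
Qed.

Lemma gr_act_indicator p (a0 : A) (b : B) :
  gr_act p (fun z => if z == a0 then b else 0) 0 = b *~ coef p a0.
Proof.
rewrite /gr_act /coef; elim: p => [|[r a] p IH]; first by rewrite !big_nil mulr0z.
by rewrite !big_cons /= IH add0r; case: eqP => _; rewrite ?mulrzDr ?mul0rz ?add0r.
Qed.

(* [a] - [0], the element by which Delta_a acts *)
Definition gr_delta (a : A) : gr A := [:: (1%Z, a); ((-1)%Z, 0)].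

Fixpoint gr_deltas (s : seq A) : gr A :=
  if s is a :: s' then gr_mul (gr_deltas s') (gr_delta a) else [:: (1%Z, 0)].

Lemma foldr_Delta_gr_act (f : A -> B) s y :
  foldr (@Delta A B) f s y = gr_act (gr_deltas s) f y.
Proof.
elim: s y => [|a s IH] y /=.
  by rewrite /gr_act big_cons big_nil addr0 mulr1z addr0.
rewrite /Delta !IH gr_act_mul !big_cons big_nil /= addr0 mulr1z mulrN1z.
by congr (_ - _); apply: eq_bigr => ra _; rewrite ?addr0 // addrAC.
Qed.

Lemma ipow_gr_deltas e s : ipow e (size s) (gr_deltas s).
Proof.
elim: s => [|a s IH] /=; first exact: ipow_0.
by apply: ipow_mul; rewrite // /in_aug_ideal /aug !big_cons big_nil /= addrN.
Qed.

End Differences.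

Section Vanishing.

Variables A B : zmodType.

Definition Delta_vanishing (f : A -> B) (n : nat) : Prop :=
  forall s : seq A, size s = n -> forall x, foldr (@Delta A B) f s x = 0.

Lemma foldr_Delta0 (f : A -> B) s y : (forall x, f x = 0) -> foldr (@Delta A B) f s y = 0.
Proof.
move=> f0; elim: s y => [|a s IH] y /=; first exact: f0.
by rewrite /Delta !IH subrr.
Qed.

Lemma Delta_vanishing_mono (f : A -> B) m n :
  (m <= n)%N -> Delta_vanishing f m -> Delta_vanishing f n.
Proof.
move=> lemn van s sz y; rewrite -(cat_take_drop (n - m) s) foldr_cat.
by apply: foldr_Delta0 => x; apply: van; rewrite size_drop sz subKn.
Qed.

Lemma Delta_vanishing_Delta (f : A -> B) a n :
  Delta_vanishing f n.+1 -> Delta_vanishing (Delta a f) n.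
Proof.
move=> van s sz y.
by rewrite -[Delta a f]/(foldr (@Delta A B) f [:: a]) -foldr_cat van // size_cat sz addn1.
Qed.

Lemma ipow_gr_act_eq0 n p : ipow (eB B) n p ->
  forall f : A -> B, Delta_vanishing f n -> forall y, gr_act p f y = 0.
Proof.
elim=> {n p} [p f van y|n f _ y|n p q _ IHp _ IHq f van y|n p q _ IHp aug_q f van y].
- rewrite /gr_act big1 // => ra _.
  by have /= -> := van [::] erefl (y + ra.2); rewrite mul0rz.
- by rewrite /gr_act big_nil.
- by rewrite gr_act_cat IHp // IHq // addr0.
- have shift_inv b : gr_act p (fun z => f (z + b)) y = gr_act p f y.
    by apply/eqP; rewrite -subr_eq0 -gr_act_Delta IHp //; apply: Delta_vanishing_Delta.
  rewrite gr_act_mul; under eq_bigr => sb _ do rewrite shift_inv.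
  by rewrite -mulrz_sumr; exact: (proj2 (mulrz_eq0_mod_eB B _) aug_q).
Qed.

Lemma aug_pow_zero_Delta_vanishing n (f : A -> B) :
  aug_pow_zero (eB B) A n -> Delta_vanishing f n.
Proof.
move=> In0 s sz y; rewrite -{}sz in In0; rewrite foldr_Delta_gr_act.
rewrite (gr_act_coef _ _ (undup_uniq (map snd (gr_deltas s)))); last first.
  by move=> z; rewrite mem_undup.
rewrite big1 // => a _.
exact: (proj2 (mulrz_eq0_mod_eB B _) (In0 _ (ipow_gr_deltas _ s) a)).
Qed.

(* An element of I^n with a coefficient c <> 0 mod e(B) at a0 does not
   annihilate the indicator of a0 with value some b satisfying b *~ c <> 0. *)
Lemma not_aug_pow_zero_witness n : ~ aug_pow_zero (eB B) A n ->
  exists f : A -> B, ~ Delta_vanishing f n.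
Proof.
move=> In_neq0.
have [p [In_p p_neq0]] : exists p : gr A, ipow (eB B) n p /\ ~ gr_zero (eB B) p.
  by apply: NNPP => no_p; apply: In_neq0 => p In_p; apply: NNPP => p0; apply: no_p; exists p.
have [a0 coef_neq0] : exists a0, ~ (coef p a0 = 0 %[mod (eB B)%:Z])%Z.
  by apply: NNPP => no_a0; apply: p_neq0 => a; apply: NNPP => c0; apply: no_a0; exists a.
have [b bc_neq0] : exists b : B, b *~ coef p a0 <> 0.
  apply: NNPP => no_b; apply/coef_neq0/(mulrz_eq0_mod_eB B) => b.
  by apply: NNPP => bc0; apply: no_b; exists b.
exists (fun z => if z == a0 then b else 0) => van; apply: bc_neq0.
by rewrite -gr_act_indicator (ipow_gr_act_eq0 In_p van).
Qed.

Lemma not_aug_pow_zero0 : nontrivial B -> ~ aug_pow_zero (eB B) A 0.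
Proof.
move=> [b b_neq0] I0.
have coef1 : coef [:: (1%Z, 0 : A)] 0 = 1 by rewrite /coef big_cons eqxx big_nil addr0.
move: b_neq0; rewrite -(mulr1z b) -coef1.
by rewrite (proj2 (mulrz_eq0_mod_eB B _) (I0 _ (ipow_0 _ _) 0)) eqxx.
Qed.

End Vanishing.

Section Degree.

Variables A B : zmodType.

Lemma fdeg_le (f : A -> B) k : Delta_vanishing f k.+1 -> ele (fdeg f) (Fin k).
Proof.
move=> van; rewrite /fdeg; case: excluded_middle_informative => // f_neq0.
case E: (least _) => [|m|] //; first by have [_ min] := leastP E; apply: min.
by move/least_PInf: E; case; exists k.
Qed.

Lemma fdeg_ge (f : A -> B) k : ~ Delta_vanishing f k -> ele (Fin k) (fdeg f).
Proof.
move=> not_van; rewrite /fdeg; case: excluded_middle_informative => [f0|f_neq0].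
  by case: not_van => s _ y; apply: foldr_Delta0.
case E: (least _) => [|m|] //; first by move: E => /least_neq_NInf.
rewrite /= leqNgt; apply/negP => ltmk; apply: not_van.
by apply: Delta_vanishing_mono ltmk _; have [] := leastP E.
Qed.

Lemma delta_ub_ge k : ~ aug_pow_zero (eB B) A k ->
  forall v, (forall d, (exists f : A -> B, fdeg f = d) -> ele d v) -> ele (Fin k) v.
Proof.
move=> Ik_neq0 v ub; have [f not_van] := not_aug_pow_zero_witness Ik_neq0.
exact: ele_trans (fdeg_ge not_van) (ub _ (ex_intro _ f erefl)).
Qed.

Lemma delta_eq : nontrivial B -> delta A B = epred (nu (eB B) A).
Proof.
move=> ntB; rewrite /delta /nu; case E: (least _) => [|k|] /=.
- by move: E => /least_neq_NInf.
- have [Ik0 k_min] := leastP E.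
  have k_gt0 : (0 < k)%N.
    by rewrite lt0n; apply: contraPneq Ik0 => ->; apply: not_aug_pow_zero0.
  apply: esup_eq => [_ [f <-]|].
    by apply: fdeg_le; rewrite prednK //; apply: aug_pow_zero_Delta_vanishing.
  apply: delta_ub_ge => Ik1_0.
  by have := k_min _ Ik1_0; rewrite leqNgt prednK ?leqnn.
- move/least_PInf: E => no_k; apply: esup_eq => [[|m|] //|[|m|] ub //].
  + by have := delta_ub_ge (fun I0 => no_k (ex_intro _ 0%N I0)) ub.
  + by have := delta_ub_ge (fun I0 => no_k (ex_intro _ m.+1 I0)) ub; rewrite /= ltnn.
Qed.

End Degree.

Theorem theorem4p1 (A B : zmodType) :
  nontrivial A -> nontrivial B ->
  [/\ delta A B = epred (nu (eB B) A),
      (delta A B <> PInf <-> exists n, aug_pow_zero (eB B) A n)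
    & forall B' : zmodType, nontrivial B' -> expB B' = expB B -> delta A B' = delta A B].
Proof.
move=> _ ntB; split; first exact: delta_eq.
- rewrite delta_eq // /nu; split.
  + by move=> finite; apply: NNPP => /least_PInf infinite; rewrite infinite in finite.
  + by move=> ex; case E: (least _) => //; move/least_PInf: E.
- by move=> B' ntB' eq_exp; rewrite !delta_eq // /eB eq_exp.
Qed.
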